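(* Let $A$ be an integral quantum B-algebra, let $X,F\in U(A)$ and let $F$ be a filter of $A$. Then: (1) $\mu_F(X)=\big(\mu_F(X)\cdot\mu_F(X)\big)\cap X$; (2) if $1\in \mu_F(X)\leadsto(\mu_F(X)\to X)$, then $\mu_F(X)\cdot\mu_F\big(\mu_F(X)\leadsto(\mu_F(X)\to X)\big)\cdot\mu_F(X)=\mu_F(X)$; (3) $\mu_F(X)$ is a filter of $A$ if and only if $1\in \mu_F(X)\cap\big(\mu_F(X)\leadsto(\mu_F(X)\to X)\big)$.
   Context: A quantum B-algebra is a poset $(A,\le)$ with binary operations $\to,\leadsto$ such that for all $x,y,z\in A$: $y\to z\le(x\to y)\to(x\to z)$; $y\leadsto z\le(x\leadsto y)\leadsto(x\leadsto z)$; $y\le z$ implies $x\to y\le x\to z$; and $x\le y\to z$ iff $y\le x\leadsto z$. It is integral if it has a greatest element $1$ with $1\to x=1\leadsto x=x$ for all $x$. $U(A)$ denotes the set of all upper subsets of $A$ (including $\emptyset$), a quantale under inclusion with multiplication $X\cdot Y=\{a\in A\mid\exists y\in Y:\ y\to a\in X\}$. Its residuals are: for $Y,Z\in U(A)$, $Y\to Z$ is the largest $W\in U(A)$ with $W\cdot Y\subseteq Z$, and for $X,Z\in U(A)$, $X\leadsto Z$ is the largest $W\in U(A)$ with $X\cdot W\subseteq Z$. A filter of $A$ is a nonempty $F\in U(A)$ with $F\cdot F\subseteq F$. For $F,X\in U(A)$, $\mu_F(X)=F\cap X$. *)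

Set Implicit Arguments.

Record QBA := {
  car :> Type;
  le : car -> car -> Prop;
  imp : car -> car -> car;
  simp : car -> car -> car;
  le_refl : forall x, le x x;
  le_antisym : forall x y, le x y -> le y x -> x = y;
  le_trans : forall x y z, le x y -> le y z -> le x z;
  qba_ax1 : forall x y z, le (imp y z) (imp (imp x y) (imp x z));
  qba_ax2 : forall x y z, le (simp y z) (simp (simp x y) (simp x z));
  qba_ax3 : forall x y z, le y z -> le (imp x y) (imp x z);
  qba_ax4 : forall x y z, le x (imp y z) <-> le y (simp x z)
}.
Arguments le {_}.
Arguments imp {_}.
Arguments simp {_}.

Definition integral_with {A : QBA} (one : A) : Prop :=
  (forall x : A, le x one) /\
  (forall x : A, imp one x = x /\ simp one x = x).

Definition subset_of (A : QBA) := A -> Prop.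

Definition sincl {A : QBA} (X Y : subset_of A) : Prop := forall a, X a -> Y a.
Definition seq_set {A : QBA} (X Y : subset_of A) : Prop := forall a, X a <-> Y a.
Definition sinter {A : QBA} (X Y : subset_of A) : subset_of A := fun a => X a /\ Y a.

(** Upper subsets (elements of U(A), the empty set included). *)
Definition upper {A : QBA} (X : subset_of A) : Prop :=
  forall x y, X x -> le x y -> X y.

Definition umul {A : QBA} (X Y : subset_of A) : subset_of A :=
  fun a => exists y, Y y /\ X (imp y a).

(** Residuals of U(A), defined literally as the largest upper set with the
    required property, i.e. the union of all such upper sets. *)
Definition uimp {A : QBA} (Y Z : subset_of A) : subset_of A :=
  fun a => exists W : subset_of A, upper W /\ sincl (umul W Y) Z /\ W a.
Definition usimp {A : QBA} (X Z : subset_of A) : subset_of A :=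
  fun a => exists W : subset_of A, upper W /\ sincl (umul X W) Z /\ W a.

Definition is_filter {A : QBA} (F : subset_of A) : Prop :=
  (exists a, F a) /\ upper F /\ sincl (umul F F) F.

Definition muF {A : QBA} (F X : subset_of A) : subset_of A := sinter F X.

Set Implicit Arguments.
Unset Strict Implicit.

(* Inside U(A) the residuals obey the usual adjunctions, so [1 ∈ M ⇝ (M → X)]
   says exactly [M ⊆ M → X], i.e. [M · M ⊆ X].  Since [M = F ∩ X] with [F] a
   filter, [M · M ⊆ F] always holds; hence all three claims reduce to
   inclusions between products, obtained from monotonicity of the product and
   from [Y ⊆ Y · Z] whenever [1 ∈ Z] (because [1 → a = a]) or [1 ∈ Y] (because
   [a → a = 1]). *)

Section UpperSets.

Context {A : QBA}.
Implicit Types X Y Z W F : subset_of A.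

Lemma sincl_refl {X} : sincl X X.
Proof. intros a Ha. exact Ha. Qed.

Lemma sincl_trans X Y Z : sincl X Y -> sincl Y Z -> sincl X Z.
Proof. intros HXY HYZ a Ha. exact (HYZ a (HXY a Ha)). Qed.

Lemma upper_sinter X Y : upper X -> upper Y -> upper (sinter X Y).
Proof.
  intros HX HY x y [Hx Hy] Hxy.
  split; [exact (HX x y Hx Hxy) | exact (HY x y Hy Hxy)].
Qed.

Lemma muF_sub_l {F X} : sincl (muF F X) F.
Proof. intros a Ha. exact (proj1 Ha). Qed.

Lemma muF_sub_r {F X} : sincl (muF F X) X.
Proof. intros a Ha. exact (proj2 Ha). Qed.

Lemma umul_mono X X' Y Y' :
  sincl X X' -> sincl Y Y' -> sincl (umul X Y) (umul X' Y').
Proof.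
  intros HX HY a [y [Hy Hya]].
  exists y. split; [exact (HY y Hy) | exact (HX _ Hya)].
Qed.

Lemma umul_uimp_sub Y Z : sincl (umul (uimp Y Z) Y) Z.
Proof. intros a [y [Hy [W [_ [HWY HW]]]]]. apply HWY. exists y. split; assumption. Qed.

Lemma umul_usimp_sub X Z : sincl (umul X (usimp X Z)) Z.
Proof. intros a [y [[W [_ [HXW HW]]] Hya]]. apply HXW. exists y. split; assumption. Qed.

Lemma uimp_adjoint W Y Z :
  upper W -> (sincl W (uimp Y Z) <-> sincl (umul W Y) Z).
Proof.
  intros HW. split.
  - intros HWYZ. apply (sincl_trans (umul_mono HWYZ sincl_refl)).
    apply umul_uimp_sub.
  - intros HWY a Ha. exists W. auto.
Qed.

Lemma filter_upper F : is_filter F -> upper F.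
Proof. intros HF. exact (proj1 (proj2 HF)). Qed.

Lemma filter_umul_sub F : is_filter F -> sincl (umul F F) F.
Proof. intros HF. exact (proj2 (proj2 HF)). Qed.

Lemma umul_sub_filter F X Y :
  is_filter F -> sincl X F -> sincl Y F -> sincl (umul X Y) F.
Proof.
  intros HF HXF HYF. exact (sincl_trans (umul_mono HXF HYF) (filter_umul_sub HF)).
Qed.

End UpperSets.

Section Integral.

Variables (A : QBA) (one : A).
Hypothesis Hone : integral_with one.
Implicit Types X Y Z F : subset_of A.

Lemma imp_self (a : A) : imp a a = one.
Proof.
  destruct Hone as [Htop Hid]. apply le_antisym; [apply Htop |].
  apply qba_ax4. rewrite (proj2 (Hid a)). apply le_refl.
Qed.

Lemma upper_one X (a : A) : upper X -> X a -> X one.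
Proof. intros HX Ha. exact (HX a one Ha (proj1 Hone a)). Qed.

Lemma filter_one F : is_filter F -> F one.
Proof.
  intros HF. destruct (proj1 HF) as [a Ha].
  exact (upper_one (filter_upper HF) Ha).
Qed.

Lemma umul_sup_l X Y : Y one -> sincl X (umul X Y).
Proof.
  intros Y1 a Ha. exists one. split; [exact Y1 |].
  rewrite (proj1 (proj2 Hone a)). exact Ha.
Qed.

Lemma umul_sup_r X Y : X one -> sincl Y (umul X Y).
Proof. intros X1 a Ha. exists a. rewrite imp_self. split; assumption. Qed.

Lemma upper_sub_umul_self X : upper X -> sincl X (umul X X).
Proof. intros HX a Ha. exact (umul_sup_r (upper_one HX Ha) Ha). Qed.

(* For [<-], the witness is the upper set [{1}], the unit of the product of U(A). *)
Lemma usimp_one_iff X Z : usimp X Z one <-> sincl X Z.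
Proof.
  split.
  - intros HS. exact (sincl_trans (umul_sup_l HS) (umul_usimp_sub (Z:=Z))).
  - intros HXZ. exists (fun a => a = one). split; [| split; [| reflexivity]].
    + intros x y -> H1y. apply le_antisym; [apply Hone | exact H1y].
    + intros a [y [-> Ha]]. apply HXZ. rewrite (proj1 (proj2 Hone a)) in Ha. exact Ha.
Qed.

Section FilterMeet.

Variables X F : subset_of A.
Hypotheses (HX : upper X) (HF : is_filter F).

Let M := muF F X.

Lemma upper_muF : upper M.
Proof. exact (upper_sinter (filter_upper HF) HX). Qed.

Lemma muF_eq_umul_sinter : seq_set M (sinter (umul M M) X).
Proof.
  intros a. split.
  - intros Ha. split; [exact (upper_sub_umul_self upper_muF Ha) | exact (proj2 Ha)].
  - intros [Ha HXa]. split; [| exact HXa].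
    exact (umul_sub_filter HF muF_sub_l muF_sub_l Ha).
Qed.

Lemma usimp_muF_one_iff :
  usimp M (uimp M X) one <-> sincl (umul M M) X.
Proof. exact (iff_trans (usimp_one_iff _ _) (uimp_adjoint _ _ upper_muF)). Qed.

Lemma muF_filter_iff : is_filter M <-> M one /\ sincl (umul M M) X.
Proof.
  split.
  - intros HM. split; [exact (filter_one HM) |].
    exact (sincl_trans (filter_umul_sub HM) muF_sub_r).
  - intros [M1 HMM]. split; [exists one; exact M1 | split; [exact upper_muF |]].
    intros a Ha. split; [exact (umul_sub_filter HF muF_sub_l muF_sub_l Ha) |].
    exact (HMM a Ha).
Qed.

Lemma muF_sandwich :
  usimp M (uimp M X) one ->
  seq_set (umul (umul M (muF F (usimp M (uimp M X)))) M) M.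
Proof.
  set (S := usimp M (uimp M X)). intros S1.
  assert (MS_sub_uimp : sincl (umul M (muF F S)) (uimp M X)).
  { apply (sincl_trans (umul_mono sincl_refl muF_sub_r)).
    apply umul_usimp_sub. }
  assert (MS_sub_F : sincl (umul M (muF F S)) F).
  { exact (umul_sub_filter HF muF_sub_l muF_sub_l). }
  assert (M_sub_MS : sincl M (umul M (muF F S))).
  { apply umul_sup_l. split; [exact (filter_one HF) | exact S1]. }
  intros a. split.
  - intros Ha. split.
    + exact (umul_sub_filter HF MS_sub_F muF_sub_l Ha).
    + apply (umul_uimp_sub (Y:=M)).
      exact (umul_mono MS_sub_uimp sincl_refl Ha).
  - intros Ha. apply (umul_mono M_sub_MS sincl_refl).
    exact (upper_sub_umul_self upper_muF Ha).
Qed.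

End FilterMeet.

End Integral.

Theorem proposition3p2 (A : QBA) (one : A) (Hone : integral_with one)
  (X F : subset_of A) (HX : upper X) (HF : is_filter F) :
  let M := muF F X in
  seq_set M (sinter (umul M M) X)
  /\ (usimp M (uimp M X) one ->
      seq_set (umul (umul M (muF F (usimp M (uimp M X)))) M) M)
  /\ (is_filter M <-> sinter M (usimp M (uimp M X)) one).
Proof.
  intros M. split; [| split].
  - exact (muF_eq_umul_sinter Hone HX HF).
  - exact (muF_sandwich Hone HX HF).
  - exact (iff_trans (muF_filter_iff Hone HX HF)
             (and_iff_compat_l _ (iff_sym (usimp_muF_one_iff Hone HX HF)))).
Qed.
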